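(* Let $\rho_{ABC}$ be a three-qubit state that is symmetric, i.e. invariant under every permutation of the three qubits. Then none of its three two-qubit reduced states violates the three-settings CJWR linear steering inequality, i.e. $S_{AB}\le 1$, $S_{AC}\le 1$ and $S_{BC}\le 1$.
   Context: For a two-qubit state $\rho$ let $t_{kl}=\mathrm{Tr}[\rho\,\sigma_k\otimes\sigma_l]$ ($k,l\in\{1,2,3\}$, $\sigma_k$ Pauli matrices) and $S(\rho)=\sum_{k,l}t_{kl}^2$. For a three-qubit state, $\rho_{AB},\rho_{AC},\rho_{BC}$ are its two-qubit reduced states and $S_{ij}=S(\rho_{ij})$. The three-settings CJWR linear steering inequality $\frac{1}{\sqrt3}|\sum_{k=1}^3\langle A_k\otimes B_k\rangle|\le1$ (with $A_k=\hat a_k\cdot\vec\sigma$, $\hat a_k$ unit vectors, $B_k=\hat b_k\cdot\vec\sigma$, $\hat b_k$ orthonormal) has maximal left-hand side $\sqrt{S(\rho)}$ over all settings, so it is violated by $\rho$ iff $S(\rho)>1$. *)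

From HB Require Import structures.
From mathcomp Require Import all_boot all_order all_algebra all_fingroup.
From mathcomp.real_closed Require Import complex mxtens.
Set Implicit Arguments. Unset Strict Implicit. Unset Printing Implicit Defensive.
Import Order.TTheory GRing.Theory Num.Theory.
Local Open Scope ring_scope.

Section Qubits.
Variable R : rcfType.
Local Notation C := (R[i]).

Definition adjmx m n (A : 'M[C]_(m, n)) : 'M[C]_(n, m) := (map_mx Num.conj A)^T.

Definition is_state n (rho : 'M[C]_n) : Prop :=
  [/\ adjmx rho = rho,
      forall v : 'cV[C]_n, 0 <= (adjmx v *m rho *m v) 0 0
    & \tr rho = 1].

Definition sigma1 : 'M[C]_2 := \matrix_(i, j) (if i == j then 0 else 1).
Definition sigma2 : 'M[C]_2 :=
  \matrix_(i, j) (if i == j then 0 else if i == 0 then - 'i else 'i).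
Definition sigma3 : 'M[C]_2 :=
  \matrix_(i, j) (if i == j then (if i == 0 then 1 else -1) else 0).
Definition paulis : seq 'M[C]_2 := [:: sigma1; sigma2; sigma3].

Definition tcoef (rho : 'M[C]_(2 * 2)) (sk sl : 'M[C]_2) : C :=
  \tr (rho *m (sk *t sl)).
Definition Sval (rho : 'M[C]_(2 * 2)) : C :=
  \sum_(sk <- paulis) \sum_(sl <- paulis) (tcoef rho sk sl) ^+ 2.

(* three-qubit computational basis index |a b c>, space C^2 (x) C^2 (x) C^2 *)
Definition idx2 (a b : 'I_2) : 'I_(2 * 2) := mxtens_index (a, b).
Definition idx3 (a b c : 'I_2) : 'I_(2 * 2 * 2) := mxtens_index (idx2 a b, c).
Definition qA (x : 'I_(2 * 2 * 2)) : 'I_2 := (mxtens_unindex (mxtens_unindex x).1).1.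
Definition qB (x : 'I_(2 * 2 * 2)) : 'I_2 := (mxtens_unindex (mxtens_unindex x).1).2.
Definition qC (x : 'I_(2 * 2 * 2)) : 'I_2 := (mxtens_unindex x).2.
Definition qbit (x : 'I_(2 * 2 * 2)) (q : 'I_3) : 'I_2 :=
  if val q == 0%N then qA x else if val q == 1%N then qB x else qC x.

Definition perm_idx (s : 'S_3) (x : 'I_(2 * 2 * 2)) : 'I_(2 * 2 * 2) :=
  idx3 (qbit x (s 0)) (qbit x (s 1)) (qbit x (s 2)).

(* invariance under every permutation of the three qubits: P_s rho P_s^dag = rho *)
Definition symmetric3 (rho : 'M[C]_(2 * 2 * 2)) : Prop :=
  forall (s : 'S_3) (x y : 'I_(2 * 2 * 2)), rho (perm_idx s x) (perm_idx s y) = rho x y.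

Definition rhoAB (rho : 'M[C]_(2 * 2 * 2)) : 'M[C]_(2 * 2) :=
  \matrix_(i, j) \sum_(c < 2)
     rho (idx3 (mxtens_unindex i).1 (mxtens_unindex i).2 c)
         (idx3 (mxtens_unindex j).1 (mxtens_unindex j).2 c).
Definition rhoAC (rho : 'M[C]_(2 * 2 * 2)) : 'M[C]_(2 * 2) :=
  \matrix_(i, j) \sum_(b < 2)
     rho (idx3 (mxtens_unindex i).1 b (mxtens_unindex i).2)
         (idx3 (mxtens_unindex j).1 b (mxtens_unindex j).2).
Definition rhoBC (rho : 'M[C]_(2 * 2 * 2)) : 'M[C]_(2 * 2) :=
  \matrix_(i, j) \sum_(a < 2)
     rho (idx3 a (mxtens_unindex i).1 (mxtens_unindex i).2)
         (idx3 a (mxtens_unindex j).1 (mxtens_unindex j).2).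

End Qubits.

(* For every three-qubit rho, expanding the Pauli correlations gives
     S_AB + S_AC + S_BC = 4 (tr rho^2 + tr (rho rho~)) - (tr rho)^2,
   where rho~ = J rho^T J^T is Wootters' spin flip.  For a state, a spectral argument
   bounds tr rho^2 + tr (rho rho~) by (tr rho)^2 = 1, so the three correlation
   strengths sum to at most 3; for a symmetric state they are equal. *)
From HB Require Import structures.
From mathcomp Require Import all_boot all_order all_algebra all_fingroup.
From mathcomp.real_closed Require Import complex mxtens.
From mathcomp Require Import ring.
Set Implicit Arguments. Unset Strict Implicit. Unset Printing Implicit Defensive.
Import Order.TTheory GRing.Theory Num.Theory.
Local Open Scope ring_scope.
Local Open Scope sesquilinear_scope.

Section BigSums.
Context {V : nmodType}.

Lemma big_ord2 (F : 'I_2 -> V) : \sum_(i < 2) F i = F ord0 + F ord_max.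
Proof. by rewrite big_ord_recl big_ord1; congr (_ + F _); apply: val_inj. Qed.

Lemma big_mxtens m n (F : 'I_(m * n) -> V) :
  \sum_(k < m * n) F k = \sum_(i < m) \sum_(j < n) F (mxtens_index (i, j)).
Proof.
rewrite pair_big (reindex (@mxtens_index m n)) /=; first by apply: eq_bigr => -[].
by exists (@mxtens_unindex m n) => k _; rewrite (mxtens_indexK, mxtens_unindexK).
Qed.

End BigSums.

Lemma rev_ord0 n : rev_ord (ord0 : 'I_n.+1) = ord_max.
Proof. by apply: val_inj; rewrite /= subn1. Qed.

Lemma rev_ord_max n : rev_ord (ord_max : 'I_n.+1) = ord0.
Proof. by apply: val_inj; rewrite /= subnn. Qed.

Section MatrixTrace.
Context {K : pzSemiRingType} {n : nat}.

Lemma mxtrace_mulE (A B : 'M[K]_n) : \tr (A *m B) = \sum_i \sum_j A i j * B j i.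
Proof. by apply: eq_bigr => i _; rewrite mxE. Qed.

Lemma mxtrace_mul_trmx (A B : 'M[K]_n) : \tr (A *m B^T) = \sum_i \sum_j A i j * B i j.
Proof. by apply: eq_bigr => i _; rewrite mxE; apply: eq_bigr => j _; rewrite mxE. Qed.

End MatrixTrace.

Lemma trmxC_mul {C : numClosedFieldType} m n p (A : 'M[C]_(m, n)) (B : 'M[C]_(n, p)) :
  (A *m B) ^t* = B ^t* *m A ^t*.
Proof. by rewrite trmx_mul map_mxM. Qed.

Section SignedPermutation.
Context {K : comNzRingType} {n : nat}.

Variables (s : 'I_n -> K) (f : 'I_n -> 'I_n).
Hypothesis fK : involutive f.

Definition signed_perm_mx : 'M[K]_n := \matrix_(i, j) (s i * (f i == j)%:R).
Local Notation J := signed_perm_mx.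

Lemma mul_signed_perm_mx m (M : 'M[K]_(n, m)) i j : (J *m M) i j = s i * M (f i) j.
Proof.
rewrite mxE (bigD1 (f i)) //= mxE eqxx mulr1 big1 ?addr0 // => k /negbTE nk.
by rewrite mxE eq_sym nk mulr0 mul0r.
Qed.

Lemma mul_mx_signed_perm m (M : 'M[K]_(m, n)) i j : (M *m J) i j = M i (f j) * s (f j).
Proof.
rewrite mxE (bigD1 (f j)) //= mxE fK eqxx mulr1 big1 ?addr0 // => k /negbTE nk.
by rewrite mxE -[j in f k == j]fK (can_eq fK) nk !mulr0.
Qed.

Lemma signed_perm_mx_orthogonal : (forall i, s i * s i = 1) -> J *m J^T = 1%:M.
Proof.
move=> s_sqr; apply/matrixP => i j; rewrite mul_signed_perm_mx !mxE (can_eq fK).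
by case: eqVneq => [->|_]; rewrite ?mulr1 ?mulr0.
Qed.

Lemma tr_signed_perm_mx : (forall i, s (f i) = - s i) -> J^T = - J.
Proof.
move=> s_f; apply/matrixP => i j; rewrite !mxE.
have [<-|fij] := eqVneq (f i) j; first by rewrite fK eqxx s_f !mulr1.
have /negbTE-> : f j != i by apply: contra fij => /eqP <-; rewrite fK.
by rewrite !mulr0 oppr0.
Qed.

Lemma mxtrace_signed_perm_conj (M : 'M[K]_n) :
  \tr (M *m J *m M^T *m J^T) = \sum_i \sum_j s i * s j * M i j * M (f i) (f j).
Proof.
rewrite -mulmxA -trmx_mul mxtrace_mul_trmx; apply: eq_bigr => i _.
rewrite (reindex_inj (can_inj fK)); apply: eq_bigr => j _.
by rewrite mul_mx_signed_perm mul_signed_perm_mx fK; ring.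
Qed.

End SignedPermutation.

Section SpinFlipBound.
Context {C : numClosedFieldType} {n : nat}.
Implicit Types (A H J : 'M[C]_n).

Lemma spectral_diag_ge0 A : A \is normalmx ->
  (forall v : 'cV[C]_n, 0 <= (v ^t* *m A *m v) 0 0) ->
  forall k, 0 <= spectral_diag A 0 k.
Proof.
move=> /orthomx_spectralP A_spec psdA k.
have PU := spectral_unitarymx A.
move: A_spec; set P := spectralmx A; set d := spectral_diag A => A_spec.
rewrite invmx_unitary // in A_spec.
have := psdA (P ^t* *m delta_mx k 0).
rewrite trmxC_mul trmxCK trmx_delta map_delta_mx A_spec !mulmxA !mulmxtVK //.
by rewrite -rowE -colE !mxE eqxx mulr1n.
Qed.

Lemma unitary_zero_diag_weighted_le (d : 'I_n -> C) H :
  (forall k, 0 <= d k) -> H \is unitarymx -> (forall k, H k k = 0) ->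
  \sum_k d k ^+ 2 + \sum_k \sum_l d k * d l * (H k l * (H k l)^*)
    <= (\sum_k d k) ^+ 2.
Proof.
move=> d_ge0 /unitarymxP HU H0.
have H_le1 k l : H k l * (H k l)^* <= 1.
  have /matrixP/(_ k k) := HU; rewrite !mxE eqxx mulr1n => <-.
  rewrite (bigD1 l) //= !mxE lerDl; apply: sumr_ge0 => m _.
  by rewrite !mxE mul_conjC_ge0.
rewrite expr2 mulr_suml -big_split /=; apply: ler_sum => k _.
rewrite mulr_sumr (bigD1 k) //= [X in _ <= X](bigD1 k) //= H0 mul0r mulr0 add0r.
rewrite -expr2 lerD2l; apply: ler_sum => l _.
by rewrite -[X in _ <= X]mulr1 ler_wpM2l ?mulr_ge0.
Qed.

Lemma mxtrace_diag_conj (d : 'rV[C]_n) H :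
  \tr (diag_mx d *m H *m diag_mx d *m H ^t*) =
  \sum_k \sum_l d 0 k * d 0 l * (H k l * (H k l)^*).
Proof.
apply: eq_bigr => k _; rewrite mxE; apply: eq_bigr => l _.
by rewrite mul_mx_diag mxE mul_diag_mx !mxE; ring.
Qed.

(* Writing A = P^dagger diag(d) P, the flip term is sum_kl d_k d_l |H_kl|^2 for
   H = P J P^T, which is unitary and antisymmetric, hence zero on the diagonal. *)
Lemma mxtrace_sqr_add_flip_le A J :
  A ^t* = A -> (forall v : 'cV[C]_n, 0 <= (v ^t* *m A *m v) 0 0) ->
  J *m J^T = 1%:M -> J^T = - J -> J ^ Num.conj = J ->
  \tr (A *m A) + \tr (A *m J *m A^T *m J^T) <= \tr A ^+ 2.
Proof.
move=> A_herm psdA JJT J_anti J_real.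
have A_normal : A \is normalmx by apply/normalmxP; rewrite A_herm.
have d_ge0 := spectral_diag_ge0 A_normal psdA.
have PU := spectral_unitarymx A.
move/orthomx_spectralP: A_normal.
set P := spectralmx A; set d := spectral_diag A => A_spec.
rewrite invmx_unitary // in A_spec.
have JtC : J ^t* = J^T by rewrite -map_trmx J_real.
set H := P *m J *m P^T.
have JU : J \is unitarymx by apply/unitarymxP; rewrite JtC.
have HU : H \is unitarymx by rewrite !mul_unitarymx ?trmx_unitary.
have H0 k : H k k = 0.
  have : H^T = - H by rewrite /H !trmx_mul trmxK J_anti mulNmx mulmxN mulmxA.
  by move=> /matrixP/(_ k k); rewrite !mxE => /eqP; rewrite eq_sym eqNr => /eqP.
have trA : \tr A = \sum_k d 0 k.
  by rewrite A_spec mxtrace_mulC mulmxA (unitarymxP PU) mul1mx mxtrace_diag.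
have trA2 : \tr (A *m A) = \sum_k d 0 k ^+ 2.
  rewrite A_spec !mulmxA mulmxtVK // mxtrace_mulC !mulmxA (unitarymxP PU) mul1mx.
  by apply: eq_bigr => k _; rewrite mul_diag_mx !mxE eqxx mulr1n expr2.
have trAJ : \tr (A *m J *m A^T *m J^T) = \tr (diag_mx d *m H *m diag_mx d *m H ^t*).
  transitivity (\tr (P ^t* *m (diag_mx d *m H *m diag_mx d *m H ^t*) *m P)).
    rewrite /H A_spec !trmxC_mul JtC !trmx_mul tr_diag_mx -map_trmx !trmxK.
    by rewrite !mulmxA map_trmx mulmxKtV.
  by rewrite mxtrace_mulC mulmxA (unitarymxP PU) mul1mx.
rewrite trA2 trAJ mxtrace_diag_conj trA.
exact: unitary_zero_diag_weighted_le.
Qed.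

End SpinFlipBound.

Section TwoQubits.
Variable R : rcfType.
Local Notation C := R[i].

Lemma adjmxE m n (A : 'M[C]_(m, n)) : adjmx A = A ^t*.
Proof. by rewrite /adjmx map_trmx. Qed.

Lemma big_idx2 (F : 'I_(2 * 2) -> C) :
  \sum_(k < 2 * 2) F k = \sum_(a < 2) \sum_(b < 2) F (idx2 a b).
Proof. exact: big_mxtens. Qed.

Definition ptrace_fst (M : 'M[C]_(2 * 2)) : 'M[C]_2 :=
  \matrix_(b, b') \sum_a M (idx2 a b) (idx2 a b').

Definition ptrace_snd (M : 'M[C]_(2 * 2)) : 'M[C]_2 :=
  \matrix_(a, a') \sum_b M (idx2 a b) (idx2 a' b).

Lemma ptrace_fstE M b b' : ptrace_fst M b b' = \sum_a M (idx2 a b) (idx2 a b').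
Proof. by rewrite mxE. Qed.

Lemma ptrace_sndE M a a' : ptrace_snd M a a' = \sum_b M (idx2 a b) (idx2 a' b).
Proof. by rewrite mxE. Qed.

Lemma tcoefE (M : 'M[C]_(2 * 2)) X Y : tcoef M X Y =
  \sum_a \sum_b \sum_c \sum_d M (idx2 a b) (idx2 c d) * (X c a * Y d b).
Proof.
rewrite /tcoef mxtrace_mulE big_idx2; apply: eq_bigr => a _; apply: eq_bigr => b _.
by rewrite big_idx2; apply: eq_bigr => c _; apply: eq_bigr => d _; rewrite tensmxE.
Qed.

Lemma big_paulis (F : 'M[C]_2 -> C) :
  \sum_(s <- paulis R) F s = F (sigma1 R) + F (sigma2 R) + F (sigma3 R).
Proof. by rewrite !big_cons big_nil addr0 addrA. Qed.

(* The coefficients t_kl are generalized away before expanding the Pauli sums,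
   since matching a bigop against the unfolded traces is very slow. *)
Lemma Sval_ptrace (M : 'M[C]_(2 * 2)) : Sval M =
  4 * \tr (M *m M) - 2 * \tr (ptrace_fst M *m ptrace_fst M)
  - 2 * \tr (ptrace_snd M *m ptrace_snd M) + \tr M ^+ 2.
Proof.
rewrite /Sval; move: (tcoef M) (tcoefE M) => t tE.
rewrite !big_paulis !tE !mxtrace_mulE /mxtrace !(big_idx2, big_ord2) !mxE /=.
by rewrite !(big_idx2, big_ord2); ring: (@sqrCi C).
Qed.

End TwoQubits.

Section ThreeQubits.
Variable R : rcfType.
Local Notation C := R[i].
Implicit Types (a b c : 'I_2) (x : 'I_(2 * 2 * 2)) (rho : 'M[C]_(2 * 2 * 2)).

Lemma big_idx3 (F : 'I_(2 * 2 * 2) -> C) :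
  \sum_(k < 2 * 2 * 2) F k = \sum_(a < 2) \sum_(b < 2) \sum_(c < 2) F (idx3 a b c).
Proof. by rewrite big_mxtens big_idx2. Qed.

Lemma qA_idx3 a b c : qA (idx3 a b c) = a.
Proof. by rewrite /qA /idx3 mxtens_indexK /idx2 mxtens_indexK. Qed.

Lemma qB_idx3 a b c : qB (idx3 a b c) = b.
Proof. by rewrite /qB /idx3 mxtens_indexK /idx2 mxtens_indexK. Qed.

Lemma qC_idx3 a b c : qC (idx3 a b c) = c.
Proof. by rewrite /qC /idx3 mxtens_indexK. Qed.

Lemma idx3_bits x : idx3 (qA x) (qB x) (qC x) = x.
Proof.
by rewrite /idx3 /idx2 /qA /qB /qC -!surjective_pairing !mxtens_unindexK.
Qed.

Definition flip3 x : 'I_(2 * 2 * 2) :=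
  idx3 (rev_ord (qA x)) (rev_ord (qB x)) (rev_ord (qC x)).

Definition bit_sign a : C := if a == ord0 then -1 else 1.

Definition sign3 x : C := bit_sign (qA x) * bit_sign (qB x) * bit_sign (qC x).

Lemma flip3E a b c : flip3 (idx3 a b c) = idx3 (rev_ord a) (rev_ord b) (rev_ord c).
Proof. by rewrite /flip3 qA_idx3 qB_idx3 qC_idx3. Qed.

Lemma flip3K : involutive flip3.
Proof. by move=> x; rewrite [flip3 x]/flip3 flip3E !rev_ordK idx3_bits. Qed.

Lemma sign3E a b c : sign3 (idx3 a b c) = bit_sign a * bit_sign b * bit_sign c.
Proof. by rewrite /sign3 qA_idx3 qB_idx3 qC_idx3. Qed.

Lemma bit_sign_rev a : bit_sign (rev_ord a) = - bit_sign a.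
Proof. by case: a => -[|[|//]] ?; rewrite /bit_sign /= ?opprK. Qed.

Lemma bit_sign_sqr a : bit_sign a * bit_sign a = 1.
Proof. by rewrite /bit_sign; case: ifP; rewrite ?mulrNN mulr1. Qed.

Lemma sign3_flip3 x : sign3 (flip3 x) = - sign3 x.
Proof. by rewrite /flip3 sign3E !bit_sign_rev /sign3 !mulrN !mulNr opprK. Qed.

Lemma sign3_sqr x : sign3 x * sign3 x = 1.
Proof.
rewrite /sign3.
by ring: (bit_sign_sqr (qA x)) (bit_sign_sqr (qB x)) (bit_sign_sqr (qC x)).
Qed.

(* Up to sign, J3 = (i sigma_y)^(x3), so rho ~> J3 rho^T J3^T is the spin flip. *)
Definition J3 : 'M[C]_(2 * 2 * 2) := signed_perm_mx sign3 flip3.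

Lemma J3_orthogonal : J3 *m J3^T = 1%:M.
Proof. exact: signed_perm_mx_orthogonal flip3K sign3_sqr. Qed.

Lemma tr_J3 : J3^T = - J3.
Proof. exact: tr_signed_perm_mx flip3K sign3_flip3. Qed.

Lemma J3_real : J3 ^ Num.conj = J3.
Proof.
apply/matrixP => x y; rewrite !mxE rmorphM rmorph_nat /sign3 !rmorphM.
by rewrite /bit_sign; do 3![case: ifP => _]; rewrite ?rmorphN1 ?rmorph1.
Qed.

Lemma rhoABE rho a b a' b' :
  rhoAB rho (idx2 a b) (idx2 a' b') = \sum_c rho (idx3 a b c) (idx3 a' b' c).
Proof. by rewrite mxE /idx2 !mxtens_indexK. Qed.

Lemma rhoACE rho a c a' c' :
  rhoAC rho (idx2 a c) (idx2 a' c') = \sum_b rho (idx3 a b c) (idx3 a' b c').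
Proof. by rewrite mxE /idx2 !mxtens_indexK. Qed.

Lemma rhoBCE rho b c b' c' :
  rhoBC rho (idx2 b c) (idx2 b' c') = \sum_a rho (idx3 a b c) (idx3 a b' c').
Proof. by rewrite mxE /idx2 !mxtens_indexK. Qed.

(* Both sides equal 3 (tr rho)^2 - 4 sum_i tr rho_i^2 + 4 sum_ij tr rho_ij^2. *)
Lemma Sval_reduced_sum rho :
  Sval (rhoAB rho) + Sval (rhoAC rho) + Sval (rhoBC rho) =
  4 * (\tr (rho *m rho) + \tr (rho *m J3 *m rho^T *m J3^T)) - \tr rho ^+ 2.
Proof.
rewrite (mxtrace_signed_perm_conj _ flip3K) !Sval_ptrace !mxtrace_mulE /mxtrace.
rewrite !(big_idx3, big_idx2, big_ord2).
rewrite !flip3E !sign3E !rev_ord0 !rev_ord_max /bit_sign /=.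
rewrite !ptrace_fstE !ptrace_sndE !(big_idx2, big_ord2).
by rewrite !rhoABE !rhoACE !rhoBCE !big_ord2; ring.
Qed.

Lemma Sval_reduced_sum_le3 rho : is_state rho ->
  Sval (rhoAB rho) + Sval (rhoAC rho) + Sval (rhoBC rho) <= 3.
Proof.
case=> rho_herm rho_psd tr_rho.
have rho_herm' : rho ^t* = rho by rewrite -adjmxE.
have rho_psd' (v : 'cV_(2 * 2 * 2)) : 0 <= (v ^t* *m rho *m v) 0 0.
  by rewrite -adjmxE.
have := mxtrace_sqr_add_flip_le rho_herm' rho_psd' J3_orthogonal tr_J3 J3_real.
rewrite Sval_reduced_sum tr_rho expr1n lerBlDr (_ : 3 + 1 = 4 * 1); last by ring.
exact: ler_wpM2l.
Qed.

Lemma perm_idx_tperm12 a b c : perm_idx (tperm (1 : 'I_3) 2) (idx3 a c b) = idx3 a b c.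
Proof.
by rewrite /perm_idx /qbit tpermL tpermR tpermD //= qA_idx3 qB_idx3 qC_idx3.
Qed.

Lemma perm_idx_tperm01 a b c : perm_idx (tperm (0 : 'I_3) 1) (idx3 b a c) = idx3 a b c.
Proof.
by rewrite /perm_idx /qbit tpermL tpermR tpermD //= qA_idx3 qB_idx3 qC_idx3.
Qed.

Lemma rhoAC_sym rho : symmetric3 rho -> rhoAC rho = rhoAB rho.
Proof.
move=> rho_sym; apply/matrixP => i j; rewrite !mxE; apply: eq_bigr => b _.
by rewrite -(rho_sym (tperm 1 2)) !perm_idx_tperm12.
Qed.

Lemma rhoBC_sym rho : symmetric3 rho -> rhoBC rho = rhoAC rho.
Proof.
move=> rho_sym; apply/matrixP => i j; rewrite !mxE; apply: eq_bigr => a _.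
by rewrite -(rho_sym (tperm 0 1)) !perm_idx_tperm01.
Qed.

End ThreeQubits.

Theorem corollary1 (R : rcfType) (rho : 'M[R[i]]_(2 * 2 * 2)) :
  is_state rho -> symmetric3 rho ->
  [/\ Sval (rhoAB rho) <= 1, Sval (rhoAC rho) <= 1 & Sval (rhoBC rho) <= 1].
Proof.
move=> rho_state rho_sym.
have := Sval_reduced_sum_le3 rho_state.
rewrite (rhoBC_sym rho_sym) (rhoAC_sym rho_sym).
set S := Sval (rhoAB rho) => S_le3.
have : 3 * S <= 3 * 1 by rewrite mulr1 (_ : 3 * S = S + S + S) //; ring.
by rewrite ler_pM2l // => S_le1; split.
Qed.
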